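(* Any GET operation by client $c$ on a key $k$ of partition $p$ in which the client sends $hwv = hwm[:,p]$ (its current row for partition $p$ of the highest-write matrix) satisfies per-key read-your-write consistency: if the operation is issued at time $t$ and served by server $s$, which reads the value of $k$ at time $t'$, then every $w\in ClientWrites(c,k,t)$ is included in $CommittedWrites(s,k,t')$.
   Context: System model. Data is replicated in $D$ datacenters and split into $P$ partitions. In each datacenter $d$, each partition is replicated by a Raft group with a leader $L_d$; Raft guarantees that all members of a group commit the same totally ordered sequence of log entries, each with a log index, in increasing index order. Every version $v$ of a key carries a value, an originating datacenter $v.dc\_id$, the log index $idx(v)$ it received in the Raft log of its originating datacenter, and a hybrid logical clock (HLC) timestamp $v.t=\langle l,c\rangle$; HLC timestamps are compared lexicographically. Writes committed in the group of datacenter $d$ that originated at $d$ are forwarded, in commit order, over FIFO channels to the leaders of the same partition in every other datacenter, which append them (carrying their original index $idx(v)$) to their own Raft logs. Each server $s$ keeps a vector $sv$ of length $D$, initially zero; when $s$ commits a version $v$ it sets $sv[v.dc\_id]:=idx(v)$ and adds $v$ to the version chain of its key. Client protocol. Each client $c$ keeps $D\times P$ matrices $hrm$ (highest read) and $hwm$ (highest write), initially zero, and HLC timestamps $dt_r,dt_w$, initially zero. GET of key $k$ in partition $p$: the client sends vectors $hrv,hwv$ of length $D$ (each either the zero vector or $hrm[:,p]$, resp. $hwm[:,p]$); the server blocks while there is $i$ with $sv[i]<hrv[i]$ or $sv[i]<hwv[i]$; it then returns the version $v$ of $k$ in its version chain with the largest timestamp, together with $v.dc\_id$, $sv[v.dc\_id]$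 and $v.t$; the client sets $hrm[v.dc\_id,p]:=\max(hrm[v.dc\_id,p],sv[v.dc\_id])$ and $dt_r:=\max(dt_r,v.t)$. PUT of key $k$ in partition $p$ at leader $L_d$: the client sends a dependency timestamp $dt$ (one of $0$, $dt_r$, $dt_w$, $\max(dt_r,dt_w)$); the leader updates its HLC $\langle l,c\rangle$ with $dt$ by the rule: $l':=l$; $l:=\max(l',pt,dt.l)$ where $pt$ is its physical clock; then $c:=\max(c,dt.c)+1$ if $l=l'=dt.l$, else $c:=c+1$ if $l=l'$, else $c:=dt.c+1$ if $l=dt.l$, else $c:=0$; it timestamps the new version with the updated HLC value $t$ and $dc\_id=d$, appends it to the Raft log, and after commit replies with $d$, $sv[d]$ and $t$; the client sets $hwm[d,p]:=\max(hwm[d,p],sv[d])$ and $dt_w:=\max(dt_w,t)$. Definitions. $CommittedWrites(s,k,t)$ is the ordered sequence of all writes of key $k$ committed at server $s$ by time $t$; $ClientWrites(c,k,t)$ is the ordered sequence of all writes of $k$ done by client $c$ by time $t$; $ClientReads(c,k,t)$ is the set of writes whose value of $k$ has been read by client $c$ by time $t$. *)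

From HB Require Import structures.
From mathcomp Require Import all_boot all_order.
From Stdlib Require List.
Set Implicit Arguments. Unset Strict Implicit. Unset Printing Implicit Defensive.

Definition hlc := (nat * nat)%type.
Definition hlc0 : hlc := (0, 0).
Definition hlc_lt (a b : hlc) : bool :=
  (a.1 < b.1) || ((a.1 == b.1) && (a.2 < b.2)).
Definition hlc_le (a b : hlc) : bool := hlc_lt a b || (a == b).
Definition hlc_max (a b : hlc) : hlc := if hlc_lt a b then b else a.

(* HLC update of a leader with current value cur, physical clock pt and
   dependency timestamp dt (rule from the paper). *)
Definition hlc_update (cur : hlc) (pt : nat) (dt : hlc) : hlc :=
  let l' := cur.1 in
  let l := maxn (maxn l' pt) dt.1 in
  let c := if (l == l') && (l' == dt.1) then (maxn cur.2 dt.2).+1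
           else if l == l' then cur.2.+1
           else if l == dt.1 then dt.2.+1
           else 0 in
  (l, c).

Record Params := {
  nD : nat;
  nP : nat;
  Member : eqType;                    (* members of a Raft group *)
  leader : 'I_nD -> 'I_nP -> Member;
  Key : eqType;
  Val : Type;
  part : Key -> 'I_nP;
  Client : eqType;
}.

Section Model.
Context (P : Params).

Notation DC := 'I_(nD P).
Notation PT := 'I_(nP P).

Record version := Version {
  vkey : Key P;
  vval : Val P;
  vdc  : DC;     (* originating datacenter *)
  vidx : nat;    (* index in the Raft log of the originating datacenter *)
  vts  : hlc;
}.

Definition server := (DC * PT * Member P)%type.

Inductive pending :=
| PNone
| PGet (k : Key P) (d : DC) (m : Member P) (hrv hwv : DC -> nat)
| PPut (k : Key P) (x : Val P) (d : DC) (dt : hlc)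
      (* PUT sent to leader L_d, not yet appended *)
| PPutWait (v : version) (pos : nat).
      (* PUT appended as version v at (0-based) position pos, awaiting commit *)

Record cstate := CState {
  hrm : DC -> PT -> nat;
  hwm : DC -> PT -> nat;
  dtr : hlc;
  dtw : hlc;
  pend : pending;
  cwrites : seq version;  (* completed writes of the client, in order *)
  creads  : seq version;
}.

Record gstate := GState {
  glog : DC -> PT -> seq version;
  ccnt : DC -> PT -> Member P -> nat;
  svec : DC -> PT -> Member P -> DC -> nat;
  clk  : DC -> PT -> Member P -> hlc;
  chan : DC -> DC -> PT -> seq version;         (* FIFO channel d -> d' for p *)
  cls  : Client P -> cstate;
}.

Definition upd {A : eqType} {B : Type} (f : A -> B) (a : A) (b : B) : A -> B :=
  fun x => if x == a then b else f x.

Definition set_client (s : gstate) (c : Client P) (cs : cstate) : gstate :=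
  GState (glog s) (ccnt s) (svec s) (clk s) (chan s) (upd (cls s) c cs).

Definition set_pend (cs : cstate) (q : pending) : cstate :=
  CState (hrm cs) (hwm cs) (dtr cs) (dtw cs) q (cwrites cs) (creads cs).

Definition zero_vec : DC -> nat := fun _ => 0.

Definition committed (s : gstate) (d : DC) (p : PT) (m : Member P) : seq version :=
  take (ccnt s d p m) (glog s d p).

Definition CommittedWrites (s : gstate) (srv : server) (k : Key P) : seq version :=
  [seq v <- committed s srv.1.1 srv.1.2 srv.2 | vkey v == k].

Definition ClientWrites (s : gstate) (c : Client P) (k : Key P) : seq version :=
  [seq v <- cwrites (cls s c) | vkey v == k].

Definition ClientReads (s : gstate) (c : Client P) (k : Key P) : seq version :=
  [seq v <- creads (cls s c) | vkey v == k].

Inductive label :=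
| LIdle
| LIssueGet (c : Client P) (k : Key P) (d : DC) (m : Member P) (hrv hwv : DC -> nat)
| LServeGet (c : Client P)
| LIssuePut (c : Client P) (k : Key P) (x : Val P) (d : DC) (dt : hlc)
| LAcceptPut (c : Client P) (pt : nat)
| LReplyPut (c : Client P)
| LCommit (d : DC) (p : PT) (m : Member P)
| LRecv (d d' : DC) (p : PT).

Definition init (s : gstate) : Prop :=
  (forall d p, glog s d p = [::]) /\
  (forall d p m, ccnt s d p m = 0) /\
  (forall d p m i, svec s d p m i = 0) /\
  (forall d p m, clk s d p m = hlc0) /\
  (forall d d' p, chan s d d' p = [::]) /\
  (forall c, cls s c = CState (fun _ _ => 0) (fun _ _ => 0) hlc0 hlc0 PNone [::] [::]).

Inductive step : gstate -> label -> gstate -> Prop :=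
| StIdle s : step s LIdle s
| StIssueGet s c k d m hrv hwv :
    pend (cls s c) = PNone ->
    hrv = zero_vec \/ hrv = (fun i => hrm (cls s c) i (part k)) ->
    hwv = zero_vec \/ hwv = (fun i => hwm (cls s c) i (part k)) ->
    step s (LIssueGet c k d m hrv hwv)
         (set_client s c (set_pend (cls s c) (PGet k d m hrv hwv)))
| StServeGetNone s c k d m hrv hwv :
    pend (cls s c) = PGet k d m hrv hwv ->
    (forall i, hrv i <= svec s d (part k) m i /\ hwv i <= svec s d (part k) m i) ->
    CommittedWrites s (d, part k, m) k = [::] ->
    step s (LServeGet c) (set_client s c (set_pend (cls s c) PNone))
| StServeGet s c k d m hrv hwv v :
    pend (cls s c) = PGet k d m hrv hwv ->
    (forall i, hrv i <= svec s d (part k) m i /\ hwv i <= svec s d (part k) m i) ->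
    List.In v (CommittedWrites s (d, part k, m) k) ->
    (forall w, List.In w (CommittedWrites s (d, part k, m) k) -> hlc_le (vts w) (vts v)) ->
    let cs := cls s c in
    step s (LServeGet c)
      (set_client s c
        (CState (upd (hrm cs) (vdc v)
                   (upd (hrm cs (vdc v)) (part k)
                      (maxn (hrm cs (vdc v) (part k)) (svec s d (part k) m (vdc v)))))
                (hwm cs) (hlc_max (dtr cs) (vts v)) (dtw cs) PNone
                (cwrites cs) (v :: creads cs)))
| StIssuePut s c k x d dt :
    pend (cls s c) = PNone ->
    [\/ dt = hlc0, dt = dtr (cls s c), dt = dtw (cls s c)
      | dt = hlc_max (dtr (cls s c)) (dtw (cls s c))] ->
    step s (LIssuePut c k x d dt)
         (set_client s c (set_pend (cls s c) (PPut k x d dt)))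
| StAcceptPut s c k x d dt pt :
    pend (cls s c) = PPut k x d dt ->
    let p := part k in
    let L := leader d p in
    let t := hlc_update (clk s d p L) pt dt in
    let pos := size (glog s d p) in
    let v := Version k x d pos.+1 t in
    step s (LAcceptPut c pt)
      (GState (upd (glog s) d (upd (glog s d) p (rcons (glog s d p) v)))
              (ccnt s) (svec s)
              (upd (clk s) d (upd (clk s d) p (upd (clk s d p) L t)))
              (chan s)
              (upd (cls s) c (set_pend (cls s c) (PPutWait v pos))))
| StReplyPut s c v pos :
    pend (cls s c) = PPutWait v pos ->
    let d := vdc v in
    let p := part (vkey v) in
    let L := leader d p in
    pos < ccnt s d p L ->
    let cs := cls s c in
    step s (LReplyPut c)
      (set_client s c
        (CState (hrm cs)
                (upd (hwm cs) d (upd (hwm cs d) p (maxn (hwm cs d p) (svec s d p L d))))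
                (dtr cs) (hlc_max (dtw cs) (vts v)) PNone
                (rcons (cwrites cs) v) (creads cs)))
| StCommit s d p m :
    let n := ccnt s d p m in
    n < size (glog s d p) ->
    forall e, nth e (glog s d p) n = e ->
    let fwd := (m == leader d p) && (vdc e == d) in
    step s (LCommit d p m)
      (GState (glog s)
              (upd (ccnt s) d (upd (ccnt s d) p (upd (ccnt s d p) m n.+1)))
              (upd (svec s) d (upd (svec s d) p (upd (svec s d p) m
                   (upd (svec s d p m) (vdc e) (vidx e)))))
              (clk s)
              (fun a b q => if fwd && (a == d) && (b != d) && (q == p)
                            then rcons (chan s a b q) e else chan s a b q)
              (cls s))
| StRecv s d d' p e rest :
    chan s d d' p = e :: rest ->
    step s (LRecv d d' p)
      (GState (upd (glog s) d' (upd (glog s d') p (rcons (glog s d' p) e)))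
              (ccnt s) (svec s) (clk s)
              (upd (chan s) d (upd (chan s d) d' (upd (chan s d d') p rest)))
              (cls s)).

Definition execution (tr : nat -> gstate) (lab : nat -> label) : Prop :=
  init (tr 0) /\ forall t, step (tr t) (lab t) (tr t.+1).

End Model.

(* Write "origin writes of i" for the versions with dc_id = i.
   Two inductive invariants hold in every reachable state:
   - LogInv (servers and channels): in the log of group (i,p) the origin
     writes of i have strictly increasing indices; the FIFO channel i -> d
     exactly tops up the origin writes of i in the log of (d,p) to those
     committed at the leader L_i; hence at every server the origin writes of
     i in its committed prefix form a prefix of those in the log of (i,p),
     and sv[i] is the index of the last of them.
   - ClientInv (clients): every completed write w of a client has a positive
     index, lies in the log of its origin group and satisfies
     idx(w) <= hwm[dc(w), p]; pending PUTs sit at their recorded log position.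
   Since the origin writes are sorted by index and form a prefix, a version of
   the origin log with idx(w) <= sv[dc(w)] is committed at the server
   (le_sv_committed).  A GET that sends hwv = hwm[:,p] is served only when
   hwv <= sv, and between issue and service the client state is frozen, so
   every write of k done by the client before the GET is committed at the
   serving server. *)
From mathcomp Require Import all_boot all_order.
From Stdlib Require List.
Set Implicit Arguments. Unset Strict Implicit. Unset Printing Implicit Defensive.

(* Versions carry values of an arbitrary type, so they form no eqType and
   membership in logs is the propositional List.In; these are its interactions
   with the seq operations used by the model. *)
Section ListMembership.
Variable T : Type.
Implicit Types (x y : T) (s : seq T).

Lemma In_cat x s1 s2 : List.In x (s1 ++ s2) <-> List.In x s1 \/ List.In x s2.
Proof. by elim: s1 => [|y s1 IH] /=; [tauto | rewrite IH; tauto]. Qed.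

Lemma In_rcons x s y : List.In x (rcons s y) <-> List.In x s \/ x = y.
Proof. by rewrite -cats1 In_cat /=; intuition. Qed.

Lemma In_filter (a : pred T) x s : List.In x (filter a s) <-> List.In x s /\ a x.
Proof.
elim: s => [|y s IH] /=; first by intuition.
case ay: (a y) => /=; rewrite IH; intuition; subst; congruence.
Qed.

Lemma In_nth x0 s n : n < size s -> List.In (nth x0 s n) s.
Proof. by elim: s n => [|y s IH] [|n] //= ltn; [left | right; apply: IH]. Qed.

Lemma In_map_mem (U : eqType) (f : T -> U) x s : List.In x s -> f x \in map f s.
Proof. by elim: s => [|y s IH] //= [-> | /IH]; rewrite inE ?eqxx // => ->; rewrite orbT. Qed.
End ListMembership.

Lemma sorted_rcons_ltn (s : seq nat) z :
  sorted ltn s -> all (fun y => y < z) s -> sorted ltn (rcons s z).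
Proof. by rewrite !(sorted_pairwise ltn_trans) pairwise_rcons => -> ->. Qed.

Lemma sorted_leq_last (s : seq nat) y : sorted ltn s -> y \in s -> y <= last 0 s.
Proof.
case/lastP: s => [_ | s z]; first by rewrite in_nil.
rewrite last_rcons mem_rcons inE (sorted_pairwise ltn_trans).
rewrite pairwise_rcons => /andP[/allP lt_z _] /orP[/eqP -> // | /lt_z]; exact: ltnW.
Qed.

(* This is how
   "sv[i] = index of the last committed origin write of i" is turned into
   membership in the committed prefix. *)
Section SortedPrefix.
Variables (T : Type) (f : T -> nat) (F R : seq T).
Hypothesis sorted_FR : sorted ltn (map f (F ++ R)).

Lemma prefix_le_last x : List.In x F -> f x <= last 0 (map f F).
Proof.
move: sorted_FR; rewrite map_cat => /cat_sorted2[sorted_F _] xF.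
exact: sorted_leq_last sorted_F (In_map_mem f xF).
Qed.

Lemma In_prefix_of_le_last x :
  List.In x (F ++ R) -> 0 < f x -> f x <= last 0 (map f F) -> List.In x F.
Proof.
case/In_cat => [// | xR] fx_pos.
move: sorted_FR; rewrite map_cat (sorted_pairwise ltn_trans) pairwise_cat.
case/and3P => /allrelP lt_FR _ _; case/lastP: F lt_FR => [_ | F' y lt_FR].
  by rewrite leqNgt fx_pos.
rewrite map_rcons last_rcons leqNgt lt_FR //; last exact: In_map_mem.
by rewrite map_rcons mem_rcons mem_head.
Qed.
End SortedPrefix.

Lemma upd2E (A1 A2 : eqType) (B : Type) (f : A1 -> A2 -> B) a1 a2 x b1 b2 :
  upd f a1 (upd (f a1) a2 x) b1 b2 = if (b1 == a1) && (b2 == a2) then x else f b1 b2.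
Proof. by rewrite /upd; case: eqP => [->|]; case: eqP. Qed.

Lemma upd3E (A1 A2 A3 : eqType) (B : Type) (f : A1 -> A2 -> A3 -> B) a1 a2 a3 x b1 b2 b3 :
  upd f a1 (upd (f a1) a2 (upd (f a1 a2) a3 x)) b1 b2 b3 =
  if [&& b1 == a1, b2 == a2 & b3 == a3] then x else f b1 b2 b3.
Proof. by rewrite /upd; case: eqP => [->|]; case: eqP => [->|]; case: eqP. Qed.

Section Model.
Variable P : Params.
Notation DC := 'I_(nD P).
Notation PT := 'I_(nP P).
Implicit Types (s : gstate P) (i d : DC) (p : PT) (m : Member P) (c : Client P)
               (cs : cstate P) (l : label P) (e v w : version P).

Definition from i e : bool := vdc e == i.

Definition origin_idx i (es : seq (version P)) : seq nat := [seq vidx e | e <- es & from i e].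

Record LogInv s : Prop := {
  commit_bound : forall d p m, ccnt s d p m <= size (glog s d p);
  chan_self : forall d p, chan s d d p = [::];
  chan_fifo : forall i d p, i != d ->
    filter (from i) (glog s d p) ++ chan s i d p = filter (from i) (committed s i p (leader i p));
  origin_sorted : forall i p, sorted ltn (origin_idx i (glog s i p));
  origin_idx_bound : forall i p, all (fun n => n <= size (glog s i p)) (origin_idx i (glog s i p));
  sv_last : forall d p m i, svec s d p m i = last 0 (origin_idx i (committed s d p m))
}.

Lemma origin_committed_prefix s i d p m : LogInv s ->
  exists R, filter (from i) (glog s i p) = filter (from i) (committed s d p m) ++ R.
Proof.
move=> I.
have split_at n es :
    filter (from i) es = filter (from i) (take n es) ++ filter (from i) (drop n es).
  by rewrite -filter_cat cat_take_drop.
case: (eqVneq i d) => [<- | ne]; first by eexists; apply: split_at.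
rewrite (split_at (ccnt s i p (leader i p))) -/(committed s i p (leader i p)).
rewrite -(chan_fifo I p ne) (split_at (ccnt s d p m) (glog s d p)) -!catA; eexists; reflexivity.
Qed.

Lemma committed_le_sv s d p m w : LogInv s ->
  List.In w (committed s d p m) -> vidx w <= svec s d p m (vdc w).
Proof.
move=> I wc; have [R eR] := origin_committed_prefix (vdc w) d p m I.
rewrite (sv_last I); apply: (prefix_le_last (f := @vidx P) (R := R)).
  by rewrite -eR; exact: origin_sorted I _ _.
by apply/In_filter; rewrite /from eqxx.
Qed.

Lemma le_sv_committed s d p m w : LogInv s ->
  List.In w (glog s (vdc w) p) -> 0 < vidx w -> vidx w <= svec s d p m (vdc w) ->
  List.In w (committed s d p m).
Proof.
move=> I wlog wpos; have [R eR] := origin_committed_prefix (vdc w) d p m I.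
rewrite (sv_last I) => le_last.
have /In_filter[] // : List.In w (filter (from (vdc w)) (committed s d p m)).
apply: (In_prefix_of_le_last (f := @vidx P) (R := R)) => //; rewrite -?eR.
  exact: origin_sorted I _ _.
by apply/In_filter; rewrite /from eqxx.
Qed.

Notation logs := (DC -> PT -> seq (version P)).
Implicit Types (L : logs).

(* L' extends every log of L; every transition extends the logs. *)
Definition extends L L' : Prop := forall d p, exists r, L' d p = L d p ++ r.

Lemma extends_refl L : extends L L.
Proof. by move=> d p; exists [::]; rewrite cats0. Qed.

Lemma extends_append L d p x : extends L (upd L d (upd (L d) p (rcons (L d p) x))).
Proof.
move=> d0 p0; rewrite upd2E; case: ifP => [/andP[/eqP -> /eqP ->] | _].
  by exists [:: x]; rewrite cats1.
by exists [::]; rewrite cats0.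
Qed.

Section Consequences.
Variables (L L' : logs) (ext : extends L L') (d : DC) (p : PT).

Lemma In_extends w : List.In w (L d p) -> List.In w (L' d p).
Proof. by have [r ->] := ext d p => wL; apply/In_cat; left. Qed.

Lemma size_extends : size (L d p) <= size (L' d p).
Proof. by have [r ->] := ext d p; rewrite size_cat leq_addr. Qed.

Lemma nth_extends x0 n : n < size (L d p) -> nth x0 (L' d p) n = nth x0 (L d p) n.
Proof. by have [r ->] := ext d p => lt; rewrite nth_cat lt. Qed.

Lemma take_extends n : n <= size (L d p) -> take n (L' d p) = take n (L d p).
Proof. by have [r ->] := ext d p => le; rewrite takel_cat. Qed.
End Consequences.

Lemma committed_extends s s' : LogInv s -> extends (glog s) (glog s') ->
  ccnt s' = ccnt s -> forall d p m, committed s' d p m = committed s d p m.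
Proof.
move=> I ext ecc d p m.
by rewrite /committed ecc (take_extends ext) // (commit_bound I).
Qed.

Lemma log_inv_set_client s c cs : LogInv s -> LogInv (set_client s c cs).
Proof. by case=> *; split. Qed.

Lemma log_inv_append_own s d p v clk' cls' : LogInv s ->
  vdc v = d -> vidx v = (size (glog s d p)).+1 ->
  LogInv (GState (upd (glog s) d (upd (glog s d) p (rcons (glog s d p) v)))
                 (ccnt s) (svec s) clk' (chan s) cls').
Proof.
move=> I vd vi; set s' := GState _ _ _ _ _ _.
have ext : extends (glog s) (glog s') := extends_append _ _ _ _.
have comm := committed_extends I ext erefl.
split => [d0 p0 m0 | | i d0 p0 ne | i p0 | i p0 | d0 p0 m0 i].
- exact: leq_trans (commit_bound I _ _ _) (size_extends ext _ _).
- exact: chan_self I.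
- rewrite comm /= upd2E -(chan_fifo I _ ne).
  case: ifP => [/andP[/eqP ed /eqP ->] | _] //.
  by rewrite filter_rcons /from vd -ed eq_sym (negbTE ne).
- rewrite /= upd2E; case: ifP => [/andP[/eqP -> _] | _]; last exact: origin_sorted I _ _.
  rewrite /origin_idx filter_rcons /from vd eqxx map_rcons vi.
  by apply: sorted_rcons_ltn; [exact: origin_sorted I _ _ | exact: origin_idx_bound I _ _].
- rewrite /= upd2E; case: ifP => [/andP[/eqP -> _] | _]; last exact: origin_idx_bound I _ _.
  rewrite /origin_idx filter_rcons /from vd eqxx map_rcons all_rcons size_rcons vi leqnn /=.
  by apply: sub_all (origin_idx_bound I d p) => n; exact: leqW.
- by rewrite comm; exact: sv_last I _ _ _ _.
Qed.

(* A leader appends the head of a FIFO channel; by chan_fifo this head is an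
   origin write of the sending datacenter. *)
Lemma log_inv_recv s d d' p e rest : LogInv s -> chan s d d' p = e :: rest ->
  LogInv (GState (upd (glog s) d' (upd (glog s d') p (rcons (glog s d' p) e)))
                 (ccnt s) (svec s) (clk s)
                 (upd (chan s) d (upd (chan s d) d' (upd (chan s d d') p rest)))
                 (cls s)).
Proof.
move=> I ech; set s' := GState _ _ _ _ _ _.
have ne : d != d'.
  by apply/eqP => edd; move: ech; rewrite -edd (chan_self I).
have ed : vdc e = d.
  have : List.In e (filter (from d) (committed s d p (leader d p))).
    by rewrite -(chan_fifo I p ne) ech In_cat /=; right; left.
  by case/In_filter => _ /eqP.
have ext : extends (glog s) (glog s') := extends_append _ _ _ _.
have comm := committed_extends I ext erefl.
split => [d0 p0 m0 | d0 p0 | i d0 p0 ne0 | i p0 | i p0 | d0 p0 m0 i].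
- exact: leq_trans (commit_bound I _ _ _) (size_extends ext _ _).
- rewrite /= upd3E; case: ifP => [/and3P[/eqP e1 /eqP e2 _] | _]; last exact: (chan_self I d0 p0).
  by rewrite -e1 e2 eqxx in ne.
- rewrite comm /= upd2E upd3E -(chan_fifo I _ ne0).
  case: ifP => [/andP[/eqP -> /eqP ->] | _]; last by rewrite andbF.
  rewrite andbT filter_rcons /from ed.
  by case: (eqVneq d i) => [<- | _] //; rewrite cat_rcons ech.
- rewrite /= upd2E; case: ifP => [/andP[/eqP -> _] | _]; last exact: origin_sorted I _ _.
  by rewrite /origin_idx filter_rcons /from ed (negbTE ne); exact: origin_sorted I _ _.
- rewrite /= upd2E; case: ifP => [/andP[/eqP -> _] | _]; last exact: origin_idx_bound I _ _.
  rewrite /origin_idx filter_rcons /from ed (negbTE ne) size_rcons.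
  by apply: sub_all (origin_idx_bound I d' p) => n; exact: leqW.
- by rewrite comm; exact: sv_last I _ _ _ _.
Qed.

Lemma log_inv_commit s d p m e : LogInv s ->
  ccnt s d p m < size (glog s d p) -> nth e (glog s d p) (ccnt s d p m) = e ->
  LogInv (GState (glog s)
    (upd (ccnt s) d (upd (ccnt s d) p (upd (ccnt s d p) m (ccnt s d p m).+1)))
    (upd (svec s) d (upd (svec s d) p (upd (svec s d p) m
         (upd (svec s d p m) (vdc e) (vidx e)))))
    (clk s)
    (fun a b q => if ((m == leader d p) && (vdc e == d)) && (a == d) && (b != d) && (q == p)
                  then rcons (chan s a b q) e else chan s a b q)
    (cls s)).
Proof.
move=> I lt en; set s' := GState _ _ _ _ _ _.
have comm d0 p0 m0 : committed s' d0 p0 m0 =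
    if [&& d0 == d, p0 == p & m0 == m] then rcons (committed s d p m) e
    else committed s d0 p0 m0.
  rewrite /committed /= upd3E; case: ifP => [/and3P[/eqP -> /eqP -> _] | _] //.
  by rewrite (take_nth e lt) en.
split => [d0 p0 m0 | d0 p0 | i d0 p0 ne | i p0 | i p0 | d0 p0 m0 i].
- rewrite /= upd3E; case: ifP => [/and3P[/eqP -> /eqP -> _] | _] //.
  exact: commit_bound I _ _ _.
- have [-> | ne] := eqVneq d0 d; first by rewrite /= eqxx /= andbF /= (chan_self I).
  by rewrite /= (negbTE ne) andbF /= (chan_self I).
- rewrite comm /=.
  have [ei | ni] := eqVneq i d; last by rewrite andbF /= (chan_fifo I _ ne).
  have [ep | np] := eqVneq p0 p; last by rewrite !andbF /= (chan_fifo I _ ne).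
  subst i p0; rewrite (eq_sym d0) ne !andbT /= (eq_sym m).
  case: eqP => [<- | _] /=; last exact: (chan_fifo I p ne).
  rewrite filter_rcons -(chan_fifo I _ ne) /from.
  by case: (vdc e == d) => //; rewrite rcons_cat.
- exact: origin_sorted I _ _.
- exact: origin_idx_bound I _ _.
- rewrite comm /= upd3E; case: ifP => [_ | _]; last exact: sv_last I _ _ _ _.
  rewrite /upd /origin_idx filter_rcons /from eq_sym.
  by case: ifP => _; rewrite ?map_rcons ?last_rcons // (sv_last I).
Qed.
Definition write_ok s (cs : cstate P) w : Prop :=
  [/\ 0 < vidx w, vidx w <= hwm cs (vdc w) (part (vkey w))
    & List.In w (glog s (vdc w) (part (vkey w)))].

Definition pending_ok s v pos : Prop :=
  [/\ 0 < vidx v, pos < size (glog s (vdc v) (part (vkey v)))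
    & nth v (glog s (vdc v) (part (vkey v))) pos = v].

Record ClientInv s : Prop := {
  write_logged : forall c w, List.In w (cwrites (cls s c)) -> write_ok s (cls s c) w;
  pending_logged : forall c v pos, pend (cls s c) = PPutWait v pos -> pending_ok s v pos
}.

Lemma client_inv_extend s s' : ClientInv s ->
  extends (glog s) (glog s') -> cls s' = cls s -> ClientInv s'.
Proof.
move=> I ext ecls; split => [c w | c v pos]; rewrite ecls.
  by case/(write_logged I) => ? ? /(In_extends ext).
case/(pending_logged I) => ? lt en; split => //.
  exact: leq_trans lt (size_extends ext _ _).
by rewrite (nth_extends ext).
Qed.

Lemma client_inv_set s c cs : ClientInv s ->
  (forall w, List.In w (cwrites cs) -> write_ok s cs w) ->
  (forall v pos, pend cs = PPutWait v pos -> pending_ok s v pos) ->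
  ClientInv (set_client s c cs).
Proof.
move=> I okw okp; split => c0 /=; rewrite /upd; case: eqP => _ //.
  exact: write_logged I c0.
exact: pending_logged I c0.
Qed.

Lemma client_inv_update s c cs : ClientInv s ->
  cwrites cs = cwrites (cls s c) -> hwm cs = hwm (cls s c) ->
  (forall v pos, pend cs <> PPutWait v pos) -> ClientInv (set_client s c cs).
Proof.
move=> I ecw ehwm npend; apply: client_inv_set => // [w | v pos /npend //].
by rewrite ecw /write_ok ehwm; exact: write_logged I c w.
Qed.

Lemma client_inv_accept s c d p v clk' : ClientInv s ->
  vdc v = d -> part (vkey v) = p -> 0 < vidx v ->
  ClientInv (GState (upd (glog s) d (upd (glog s d) p (rcons (glog s d p) v)))
                    (ccnt s) (svec s) clk' (chan s)
                    (upd (cls s) c (set_pend (cls s c) (PPutWait v (size (glog s d p)))))).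
Proof.
move=> I vd vp vpos; set s' := GState _ _ _ _ _ _.
have ext : extends (glog s) (glog s') := extends_append _ _ _ _.
split => c0 /=; rewrite /upd; case: eqP => _ /=.
- by move=> w /(write_logged I) [? ? /(In_extends ext)].
- by move=> w /(write_logged I) [? ? /(In_extends ext)].
- move=> v0 pos [<- <-]; rewrite /pending_ok /= vd vp upd2E !eqxx /=.
  by rewrite size_rcons nth_rcons ltnn eqxx.
- move=> v0 pos /(pending_logged I) [? lt en]; split => //.
    exact: leq_trans lt (size_extends ext _ _).
  by rewrite (nth_extends ext).
Qed.

(* The reply of a committed PUT raises hwm to sv[d] at the leader, which is
   at least the index of the new write because it is committed there. *)
Lemma client_inv_reply s c v pos d p hr dr dw cr : LogInv s -> ClientInv s ->
  pend (cls s c) = PPutWait v pos -> vdc v = d -> part (vkey v) = p ->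
  pos < ccnt s d p (leader d p) ->
  ClientInv (set_client s c (CState hr
    (upd (hwm (cls s c)) d (upd (hwm (cls s c) d) p
       (maxn (hwm (cls s c) d p) (svec s d p (leader d p) d))))
    dr dw (PNone P) (rcons (cwrites (cls s c)) v) cr)).
Proof.
move=> LI I epend vd vp committed_pos; set cs := cls s c.
set hwm' := upd (hwm cs) d _.
have [vpos pos_lt nth_pos] := pending_logged I epend; rewrite vd vp in pos_lt nth_pos.
have hwm_grows a b : hwm cs a b <= hwm' a b.
  by rewrite /hwm' upd2E; case: ifP => [/andP[/eqP -> /eqP ->] | _] //; exact: leq_maxl.
apply: client_inv_set => // w /In_rcons [w_old | ->].
  by have [? le ?] := write_logged I w_old; split => //; exact: leq_trans le (hwm_grows _ _).
split => //; rewrite vd vp; last by rewrite -[X in List.In X]nth_pos; exact: In_nth.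
rewrite /= /hwm' upd2E !eqxx /=; apply: leq_trans (leq_maxr _ _).
rewrite -[X in svec _ _ _ _ X]vd; apply: (committed_le_sv LI).
have pos_lt' : pos < size (committed s d p (leader d p)).
  by rewrite size_takel // (commit_bound LI).
by rewrite -[X in List.In X]nth_pos -(nth_take _ committed_pos); exact: In_nth.
Qed.
Lemma log_inv_step s l s' : step s l s' -> LogInv s -> LogInv s'.
Proof.
case=> {}s; try by [move=> I | move=> *; apply: log_inv_set_client].
- move=> c k x d dt pt _ p L t pos v I; exact: log_inv_append_own.
- move=> d p m n lt e en fwd I; exact: log_inv_commit.
- move=> d d' p e rest ech I; exact: log_inv_recv ech.
Qed.

Lemma client_inv_step s l s' : step s l s' -> LogInv s -> ClientInv s -> ClientInv s'.
Proof.
case=> // {}s.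
- by move=> c k d m hrv hwv *; apply: client_inv_update.
- by move=> c k d m hrv hwv *; apply: client_inv_update.
- by move=> c k d m hrv hwv v *; apply: client_inv_update.
- by move=> c k x d dt *; apply: client_inv_update.
- move=> c k x d dt pt _ p L t pos v _ I; exact: client_inv_accept.
- move=> c v pos epend d p L lt cs LI I; exact: client_inv_reply epend erefl erefl lt.
- move=> d p m n lt e en fwd _ I; by apply: client_inv_extend I _ _; [exact: extends_refl | ].
- move=> d d' p e rest _ _ I; by apply: client_inv_extend I _ _; [exact: extends_append | ].
Qed.

Lemma init_inv s : init s -> LogInv s /\ ClientInv s.
Proof.
case=> elog [ecc [esv [_ [ech ecls]]]]; split.
  by split => *; rewrite ?ecc ?esv ?ech /committed ?elog.
by split => c; rewrite ecls.
Qed.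

Lemma execution_inv (tr : nat -> gstate P) lab : execution tr lab ->
  forall u, LogInv (tr u) /\ ClientInv (tr u).
Proof.
case=> init steps; elim=> [|u [LI CI]]; first exact: init_inv.
by split; [exact: log_inv_step LI | exact: client_inv_step LI CI].
Qed.
Lemma issue_get_pending s l s' c k d m hrv hwv : step s l s' ->
  l = LIssueGet c k d m hrv hwv -> cls s' c = set_pend (cls s c) (PGet k d m hrv hwv).
Proof. by move=> st el; subst l; inversion st; rewrite /= /upd eqxx. Qed.

Lemma pending_get_frame s l s' c k d m hrv hwv : step s l s' ->
  pend (cls s c) = PGet k d m hrv hwv -> l <> LServeGet c -> cls s' c = cls s c.
Proof.
case=> //= *; rewrite /upd; case: eqP => // ?; subst; congruence.
Qed.

Lemma serve_get_bound s s' c k d m hrv hwv : step s (LServeGet c) s' ->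
  pend (cls s c) = PGet k d m hrv hwv -> forall i, hwv i <= svec s d (part k) m i.
Proof.
move eq_l : (LServeGet c) => l st; case: st eq_l => // s0 c0 k0 d0 m0 hrv0 hwv0;
  [move=> ep0 bound _ | move=> v ep0 bound _ _ ?] => -[?]; subst c0;
  rewrite ep0 => -[? ? ? _ ?]; subst => i;
  by case: (bound i).
Qed.

Lemma get_pending_until (tr : nat -> gstate P) (lab : nat -> label P) c k d m hrv hwv t t' :
  (forall u, step (tr u) (lab u) (tr u.+1)) -> lab t = LIssueGet c k d m hrv hwv ->
  (forall u, t < u < t' -> lab u <> LServeGet c) ->
  forall u, t < u <= t' -> cls (tr u) c = set_pend (cls (tr t) c) (PGet k d m hrv hwv).
Proof.
move=> steps issue quiet; elim=> [// | u IH] /andP[lt_tu le_ut'].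
have [-> | ne] := eqVneq u t; first exact: issue_get_pending (steps t) issue.
have lt_tu' : t < u by rewrite ltn_neqAle eq_sym ne -ltnS.
have range_u : t < u <= t' by rewrite lt_tu' ltnW.
have pending := IH range_u.
rewrite -pending; apply: pending_get_frame (steps u) _ _; first by rewrite pending.
by apply: quiet; rewrite lt_tu'.
Qed.
End Model.

Unset Implicit Arguments.

Theorem mainTheorem3 (P : Params) (tr : nat -> gstate P) (lab : nat -> label P) :
  execution tr lab ->
  forall (c : Client P) (k : Key P) (d : 'I_(nD P)) (m : Member P)
         (hrv : 'I_(nD P) -> nat) (t t' : nat),
    (* GET issued by c at time t with hwv = hwm[:,p], p = part k *)
    lab t = LIssueGet c k d m hrv (fun i => hwm (cls (tr t) c) i (part k)) ->
    (* served (value of k read) by server (d, part k, m) at time t' *)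
    t < t' -> lab t' = LServeGet c ->
    (forall u, t < u < t' -> lab u <> LServeGet c) ->
    forall w, List.In w (ClientWrites (tr t) c k) ->
              List.In w (CommittedWrites (tr t') (d, part k, m) k).
Proof.
move=> exec c k d m hrv t t' issue lt_tt' serve quiet w.
rewrite /ClientWrites /CommittedWrites => /In_filter[written /eqP wk].
apply/In_filter; split; last by rewrite wk.
have [LI CI] := execution_inv exec t'.
have steps := exec.2.
have range_t' : t < t' <= t' by rewrite lt_tt' leqnn.
have client_t' := get_pending_until steps issue quiet range_t'.
have served : step (tr t') (LServeGet c) (tr t'.+1) by rewrite -serve.
have sv_bound := serve_get_bound served (f_equal (@pend P) client_t').
have [w_pos w_hwm w_log] : write_ok (tr t') (cls (tr t') c) w.
  by apply: (write_logged CI); rewrite client_t'.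
rewrite client_t' /= wk in w_hwm w_log.
by apply: le_sv_committed LI w_log w_pos _; exact: leq_trans w_hwm (sv_bound _).
Qed.
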